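(* Let $(a_n)_{\mathrm c}\in\widetilde{\mathbb C}_{\mathrm c}$ and $c\in\widetilde{\mathbb C}$. (i) If $z\in S((a_n)_{\mathrm c},c)$ (i.e. $\sum_{n\in\widetilde{\mathbb N}}a_n(z-c)^n$ is a convergent hyperpower series), then there exists $K\in\widetilde{\mathbb N}$ such that $|a_n(z-c)^n|<K$ for all $n\in\widetilde{\mathbb N}$, where $a_n(z-c)^n$ denotes the $n$-th term of the formal hyperpower series $(a_n(z-c)^n)_n\in\widetilde{\mathbb C}_{\mathrm s}$. (ii) For all representatives $(a_n)_{\mathrm c}=[a_{n\varepsilon}]_{\mathrm c}$ and $c=[c_\varepsilon]$ there exists $\delta\in\widetilde{\mathbb R}_{>0}$ such that for every $z=[z_\varepsilon]\in B_\delta(c)$ there is $K=[K_\varepsilon]\in\widetilde{\mathbb R}_{>0}$ with: for all sufficiently small $\varepsilon$ and all $n\in\mathbb N$, $|a_{n\varepsilon}(z_\varepsilon-c_\varepsilon)^n|<K_\varepsilon$.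
   Context: Fix $I=(0,1]$ and a gauge $\rho=(\rho_\varepsilon)_{\varepsilon\in I}$ with $\rho_\varepsilon\in I$ and $\rho_\varepsilon\to0$ as $\varepsilon\to0$. ''$\forall^0\varepsilon$'' means ''for all sufficiently small $\varepsilon\in I$''. A net $(x_\varepsilon)\in\mathbb C^I$ is $\rho$-moderate ($(x_\varepsilon)\in\mathbb C_\rho$) if $\exists N\in\mathbb N\,\forall^0\varepsilon:|x_\varepsilon|\le\rho_\varepsilon^{-N}$, and $\rho$-negligible if $\forall q\in\mathbb N\,\forall^0\varepsilon:|x_\varepsilon|\le\rho_\varepsilon^q$. $\widetilde{\mathbb C}:=\mathbb C_\rho/\{\text{negligible nets}\}$ with classes $[x_\varepsilon]$; $\widetilde{\mathbb R}\subseteq\widetilde{\mathbb C}$ consists of classes of real moderate nets; $\mathrm d\rho:=[\rho_\varepsilon]$, $|[z_\varepsilon]|:=[|z_\varepsilon|]$. On $\widetilde{\mathbb R}$: $[x_\varepsilon]\le[y_\varepsilon]$ iff $x_\varepsilon\le y_\varepsilon+z_\varepsilon$ $\forall^0\varepsilon$ for some negligible $(z_\varepsilon)$; $x<y$ iff $\exists m\,\forall^0\varepsilon:y_\varepsilon-x_\varepsilon>\rho_\varepsilon^m$; $\widetilde{\mathbb R}_{>0}:=\{x:x>0\}$. $B_r(c):=\{z\in\widetilde{\mathbb C}:|z-c|<r\}$ for $r\in\widetilde{\mathbb R}_{>0}$. Hypernatural numbers: $\widetilde{\mathbb N}:=\{[n_\varepsilon]\in\widetilde{\mathbb R}:n_\varepsilon\in\mathbb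 N\ \forall\varepsilon\}$; for each $N\in\widetilde{\mathbb N}$ a representative $(\mathrm{ni}(N)_\varepsilon)$ with all $\mathrm{ni}(N)_\varepsilon\in\mathbb N$ is fixed. Hyperlimit: $l=\lim_{n\in\widetilde{\mathbb N}}a_n$ means $\forall q\,\exists M\in\widetilde{\mathbb N}\,\forall n\in\widetilde{\mathbb N}:n\ge M\Rightarrow|a_n-l|<\mathrm d\rho^q$. Hyperseries: a net $(a_{n\varepsilon})_{n\in\mathbb N,\varepsilon\in I}$ is moderate over hypersums if for every $N\in\widetilde{\mathbb N}$ the net $(\sum_{n=0}^{\mathrm{ni}(N)_\varepsilon}a_{n\varepsilon})_\varepsilon$ is $\rho$-moderate; two such nets are equivalent if for all $N,M\in\widetilde{\mathbb N}$ the net $(\sum_{n=\mathrm{ni}(N)_\varepsilon}^{\mathrm{ni}(M)_\varepsilon}(a_{n\varepsilon}-\bar a_{n\varepsilon}))_\varepsilon$ is negligible; the quotient is $\widetilde{\mathbb C}_{\mathrm s}$ with classes $(b_n)_n=[b_{n\varepsilon}]_{\mathrm s}$, and $b_N:=[b_{\mathrm{ni}(N)_\varepsilon,\varepsilon}]$ for $N\in\widetilde{\mathbb N}$ (well defined). $\sum_{n=N}^Mb_n:=[\sum_{n=\mathrm{ni}(N)_\varepsilon}^{\mathrm{ni}(M)_\varepsilon}b_{n\varepsilon}]$, and $\sum_{n\in\widetilde{\mathbb N}}b_n:=\lim_{N\in\widetilde{\mathbb N}}\sum_{n=0}^Nb_n$ when this hyperlimit exists. Coefficients: $\widetilde{\mathbb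 C}_{\mathrm c}$ is the set of weakly $\rho$-moderate nets $(a_{n\varepsilon})$ ($\exists Q,R\in\mathbb N\,\forall^0\varepsilon\,\forall n\in\mathbb N:|a_{n\varepsilon}|\le\rho_\varepsilon^{-nQ-R}$) modulo strong equivalence ($\forall q,r\,\forall^0\varepsilon\,\forall n:|a_{n\varepsilon}-\bar a_{n\varepsilon}|\le\rho_\varepsilon^{nq+r}$), classes $(a_n)_{\mathrm c}=[a_{n\varepsilon}]_{\mathrm c}$. $\widetilde{\mathbb R}_\infty:=(\mathbb R\cup\{\pm\infty\})^I/\sim_\rho$, and for $x\in\widetilde{\mathbb R}$, $y\in\widetilde{\mathbb R}_\infty$, $x<y$ iff $\exists m\,\forall^0\varepsilon:y_\varepsilon>x_\varepsilon+\rho_\varepsilon^m$. Radius: $\mathrm{rad}(a_n)_{\mathrm c}:=[(\limsup_n|a_{n\varepsilon}|^{1/n})^{-1}]\in\widetilde{\mathbb R}_\infty$. Set of convergence: $S((a_n)_{\mathrm c},c)$ is the set of $z\in\widetilde{\mathbb C}$ with $|z-c|<\mathrm{rad}(a_n)_{\mathrm c}$ for which there exist representatives $z=[z_\varepsilon]$, $c=[c_\varepsilon]$, $(a_n)_{\mathrm c}=[a_{n\varepsilon}]_{\mathrm c}$ such that: (a) the net $(a_{n\varepsilon}(z_\varepsilon-c_\varepsilon)^n)_{n,\varepsilon}$ is moderate over hypersums (its class $(a_n(z-c)^n)_n\in\widetilde{\mathbb C}_{\mathrm s}$ is the formal hyperpower series, independent of representatives); (b) the hyperseries $\sum_{n\in\widetilde{\mathbb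 N}}a_n(z-c)^n$ converges and equals $[\sum_{n=0}^{\infty}a_{n\varepsilon}(z_\varepsilon-c_\varepsilon)^n]$; (c) for every representative $z=[\hat z_\varepsilon]$, the net $(\sum_{n\ge1}na_{n\varepsilon}(\hat z_\varepsilon-c_\varepsilon)^{n-1})_\varepsilon$ is $\rho$-moderate. *)

From Stdlib Require Import Reals.
From Coquelicot Require Import Coquelicot.
Open Scope R_scope.

(* Nets indexed by I = (0,1] are represented as functions R -> X; only the
   values at eps in (0,1] matter (all notions below only look at small eps). *)

Definition small_eps (P : R -> Prop) : Prop :=
  exists e0 : R, 0 < e0 /\ forall e : R, 0 < e -> e < e0 -> P e.

Record gauge := Gauge {
  rho : R -> R;
  rho_in : forall e, 0 < e <= 1 -> 0 < rho e <= 1;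
  rho_to0 : forall eta, 0 < eta ->
     exists e0, 0 < e0 /\ forall e, 0 < e <= 1 -> e < e0 -> rho e < eta
}.

Section Colombeau.
Variable g : gauge.
Local Notation rh := (rho g).

Definition moderateR (x : R -> R) : Prop :=
  exists N : nat, small_eps (fun e => Rabs (x e) <= / (rh e ^ N)).
Definition negligibleR (x : R -> R) : Prop :=
  forall q : nat, small_eps (fun e => Rabs (x e) <= rh e ^ q).

Definition moderateC (x : R -> C) : Prop := moderateR (fun e => Cmod (x e)).
Definition negligibleC (x : R -> C) : Prop := negligibleR (fun e => Cmod (x e)).
Definition equivC (x y : R -> C) : Prop := negligibleC (fun e => Cminus (x e) (y e)).

Definition leR (x y : R -> R) : Prop :=
  exists z : R -> R, negligibleR z /\ small_eps (fun e => x e <= y e + z e).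
Definition ltR (x y : R -> R) : Prop :=
  exists m : nat, small_eps (fun e => y e - x e > rh e ^ m).

(* Hypernatural numbers: representatives with values in nat; since two
   nat-valued representatives of the same class agree for small eps,
   quantifying over all nat-valued moderate nets is the same as quantifying
   over the fixed representatives ni(N). *)
Definition hypernat (n : R -> nat) : Prop := moderateR (fun e => INR (n e)).

Definition hyperlimit (A : (R -> nat) -> R -> C) (l : R -> C) : Prop :=
  forall q : nat, exists M : R -> nat, hypernat M /\
    forall N : R -> nat, hypernat N ->
      leR (fun e => INR (M e)) (fun e => INR (N e)) ->
      ltR (fun e => Cmod (Cminus (A N e) (l e))) (fun e => rh e ^ q).

Definition hsum (b : nat -> R -> C) (N : R -> nat) : R -> C :=
  fun e => sum_n_m (fun n => b n e) 0 (N e).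

Definition mod_hypersums (b : nat -> R -> C) : Prop :=
  forall N : R -> nat, hypernat N -> moderateC (hsum b N).

Definition weakly_moderate (a : nat -> R -> C) : Prop :=
  exists Q Rr : nat, small_eps (fun e => forall n : nat,
     Cmod (a n e) <= / (rh e ^ (n * Q + Rr))).
Definition strong_equiv (a a' : nat -> R -> C) : Prop :=
  forall q r : nat, small_eps (fun e => forall n : nat,
     Cmod (Cminus (a n e) (a' n e)) <= rh e ^ (n * q + r)).

(* radius of convergence: rad_eps = (limsup_n |a_{n eps}|^(1/n))^(-1) in R u {+-oo} *)
Definition nroot (x : R) (n : nat) : R :=
  match Req_EM_T x 0 with left _ => 0 | right _ => Rpower x (/ INR n) end.
Definition Rbar_inv' (x : Rbar) : Rbar :=
  match x with
  | Finite r => match Req_EM_T r 0 with left _ => p_infty | right _ => Finite (/ r) end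
  | p_infty => Finite 0
  | m_infty => Finite 0   (* never occurs: limsup of nonnegative terms *)
  end.
Definition rad (a : nat -> R -> C) : R -> Rbar :=
  fun e => Rbar_inv' (LimSup_seq (fun n => nroot (Cmod (a n e)) n)).
Definition ltR_inf (x : R -> R) (y : R -> Rbar) : Prop :=
  exists m : nat, small_eps (fun e => Rbar_lt (Finite (x e + rh e ^ m)) (y e)).

Definition hps_net (a : nat -> R -> C) (c z : R -> C) : nat -> R -> C :=
  fun n e => Cmult (a n e) (pow_n (Cminus (z e) (c e)) n).
(* the net  n a_{n eps} (z_eps - c_eps)^(n-1), n >= 1 (term n = 0 is 0) *)
Definition deriv_net (a : nat -> R -> C) (c z : R -> C) : nat -> R -> C :=
  fun n e => Cmult (RtoC (INR n)) (Cmult (a n e) (pow_n (Cminus (z e) (c e)) (pred n))).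

Definition in_conv_set (a : nat -> R -> C) (c z : R -> C) : Prop :=
  exists (a' : nat -> R -> C) (c' z' : R -> C),
    weakly_moderate a' /\ strong_equiv a a' /\
    moderateC c' /\ equivC c c' /\ moderateC z' /\ equivC z z' /\
    ltR_inf (fun e => Cmod (Cminus (z' e) (c' e))) (rad a') /\
    mod_hypersums (hps_net a' c' z') /\
    (exists s : R -> C,
       small_eps (fun e => is_series (fun n => hps_net a' c' z' n e) (s e)) /\
       moderateC s /\
       hyperlimit (hsum (hps_net a' c' z')) s) /\
    (forall zh : R -> C, moderateC zh -> equivC z' zh ->
       exists s : R -> C,
         small_eps (fun e => is_series (fun n => deriv_net a' c' zh n e) (s e)) /\
         moderateC s).

End Colombeau.

From Stdlib Require Import Reals Lra Lia ZArith.
From Coquelicot Require Import Coquelicot.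
Open Scope R_scope.

(* (ii) If |a_n| <= rho^(-nQ-R0), then every term a_n (z-c)^n with |z-c| < rho^Q is below
   rho^(-R0).

   (i) Take the representatives witnessing z in S((a_n), c). The hyperlimit with q = 0 gives a
   hypernatural M beyond which the partial sums are within 1 of the sum, so the terms there are
   at most 2; the largest of the first M terms sits at a hypernatural index, hence is bounded by
   two moderate partial sums. Passing to arbitrary representatives a', c', z' changes a term only
   by a factor 3 and an additive moderate constant: the coefficients differ by rho^(nk), and
   |z'-c'| differs from |z-c| by rho^(Q+1+j) with n <= rho^(-j), so
   (1 + rho^(Q+1+j)/|z-c|)^n <= e unless |z-c| <= rho^(Q+1), where (ii) applies. *)

Lemma small_eps_and (P Q : R -> Prop) :
  small_eps P -> small_eps Q -> small_eps (fun e => P e /\ Q e).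
Proof.
  intros [a [Ha HP]] [b [Hb HQ]]. exists (Rmin a b). split.
  - apply Rmin_glb_lt; lra.
  - intros e He1 He2. pose proof (Rmin_l a b). pose proof (Rmin_r a b).
    split; [apply HP | apply HQ]; lra.
Qed.

Lemma small_eps_impl (P Q : R -> Prop) :
  small_eps P -> (forall e, P e -> Q e) -> small_eps Q.
Proof. intros [a [Ha HP]] H. exists a. split; auto. Qed.

Lemma small_eps_always (P : R -> Prop) : (forall e, P e) -> small_eps P.
Proof. intros H. exists 1. split; [lra | auto]. Qed.

Lemma Rle_pow_le1 (r : R) (a b : nat) : 0 < r <= 1 -> (a <= b)%nat -> r ^ b <= r ^ a.
Proof.
  intros Hr Hab. induction Hab as [|b Hab IH]; [lra|].
  simpl. assert (0 < r ^ b) by (apply pow_lt; lra). nra.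
Qed.

Lemma Rinv_pow_le1 (r : R) (a b : nat) : 0 < r <= 1 -> (a <= b)%nat -> / r ^ a <= / r ^ b.
Proof.
  intros Hr Hab. apply Rinv_le_contravar; [apply pow_lt; lra | now apply Rle_pow_le1].
Qed.

Lemma Rinv_pow_pos (r : R) (a : nat) : 0 < r -> 0 < / r ^ a.
Proof. intros Hr. apply Rinv_0_lt_compat, pow_lt, Hr. Qed.

Definition natceil (x : R) : nat := Z.to_nat (up x).

Lemma natceil_spec (x : R) : 0 <= x -> x < INR (natceil x) <= x + 1.
Proof.
  intros Hx. destruct (archimed x) as [H1 H2]. unfold natceil.
  assert (0 <= up x)%Z by (apply le_IZR; simpl; lra).
  rewrite INR_IZR_INZ, Z2Nat.id by easy. lra.
Qed.

Lemma weak_coef_pow_le (r A x : R) (n Q R0 : nat) :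
  0 < r -> 0 <= A <= / r ^ (n * Q + R0) -> 0 <= x <= r ^ Q -> A * x ^ n <= / r ^ R0.
Proof.
  intros Hr HA Hx.
  assert (Hsplit : / r ^ (n * Q + R0) * (r ^ Q) ^ n = / r ^ R0).
  { rewrite pow_add, <- pow_mult, Nat.mul_comm.
    assert (0 < r ^ (Q * n)) by (apply pow_lt; lra).
    assert (0 < r ^ R0) by (apply pow_lt; lra). field. lra. }
  rewrite <- Hsplit. apply Rmult_le_compat; try lra.
  - apply pow_le; lra.
  - apply pow_incr; lra.
Qed.

Lemma negl_coef_pow_le (r d x : R) (n k : nat) :
  0 < r -> 0 <= d <= r ^ (n * k) -> 0 <= x <= / r ^ k -> d * x ^ n <= 1.
Proof.
  intros Hr Hd Hx.
  assert (Hinv : (/ r ^ k) ^ n * r ^ (n * k) = 1).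
  { rewrite pow_inv, <- pow_mult, Nat.mul_comm. field. apply pow_nonzero. lra. }
  rewrite <- Hinv, Rmult_comm. apply Rmult_le_compat; try lra.
  - apply pow_le; lra.
  - apply pow_incr; lra.
Qed.

Lemma exp_pow (t : R) (n : nat) : exp t ^ n = exp (INR n * t).
Proof.
  induction n as [|n IH]; [simpl; now rewrite Rmult_0_l, exp_0|].
  rewrite S_INR. simpl. rewrite IH, <- exp_plus. f_equal. ring.
Qed.

(* [(1 + h / y) ^ n <= exp (n h / y) <= e < 3]. *)
Lemma pow_perturb_le (x y h : R) (n : nat) :
  0 <= x -> 0 < y -> x <= y + h -> INR n * h <= y -> x ^ n <= 3 * y ^ n.
Proof.
  intros Hx Hy Hxy Hn. set (t := h / y).
  assert (Hxt : x <= y * exp t).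
  { replace (y + h) with (y * (1 + t)) in Hxy by (unfold t; field; lra).
    pose proof (Rmult_le_compat_l y _ _ (Rlt_le _ _ Hy) (exp_ineq1_le t)). lra. }
  assert (Hnt : exp (INR n * t) <= 3).
  { apply Rle_trans with (exp 1); [|apply exp_le_3].
    assert (INR n * t <= 1).
    { unfold t. replace (INR n * (h / y)) with (INR n * h * / y) by (field; lra).
      apply Rmult_le_reg_r with y; [lra|]. rewrite Rmult_assoc, Rinv_l; lra. }
    destruct (Req_dec (INR n * t) 1) as [-> | Hne]; [lra|].
    left. apply exp_increasing. lra. }
  assert (Hpow : x ^ n <= y ^ n * exp (INR n * t)).
  { rewrite <- exp_pow, <- Rpow_mult_distr. apply pow_incr. lra. }
  assert (0 <= y ^ n) by (apply pow_le; lra). nra.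
Qed.

(* Either [x2 <= r ^ (Q + 1)], and then [x' <= r ^ Q] puts the term below [/ r ^ R0], or [x2]
   dominates the perturbation [r ^ (Q + 1 + j)] of [x'] by the factor [n]. *)
Lemma coef_pow_change_le (r A' A2 d x' x2 : R) (n Q R0 j k : nat) :
  0 < r <= 1/2 -> 0 <= A2 <= / r ^ (n * Q + R0) -> A' <= A2 + d -> 0 <= d <= r ^ (n * k) ->
  0 <= x' <= / r ^ k -> 0 <= x2 -> x' <= x2 + r ^ (Q + 1 + j) -> INR n <= / r ^ j ->
  A' * x' ^ n <= 3 * (A2 * x2 ^ n) + / r ^ R0 + 1.
Proof.
  intros Hr HA2 HA' Hd Hx' Hx2 Hxx Hn.
  assert (Hx'n : 0 <= x' ^ n) by (apply pow_le; lra).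
  assert (HrQ : 0 < r ^ Q) by (apply pow_lt; lra).
  assert (Hrj : 0 < r ^ j) by (apply pow_lt; lra).
  assert (Hsplit : r ^ (Q + 1 + j) = r ^ Q * r * r ^ j) by (rewrite !pow_add; simpl; ring).
  assert (HdA : d * x' ^ n <= 1) by (apply (negl_coef_pow_le r d x' n k); lra).
  assert (HA2x : A2 * x' ^ n <= 3 * (A2 * x2 ^ n) + / r ^ R0).
  { assert (0 <= A2 * x2 ^ n) by (apply Rmult_le_pos; [lra | apply pow_le; lra]).
    assert (0 < / r ^ R0) by (apply Rinv_pow_pos; lra).
    destruct (Rle_or_lt x2 (r ^ Q * r)) as [Hsmall | Hlarge].
    - assert (r ^ j <= 1) by (apply (Rle_pow_le1 r 0 j); [lra | lia]).
      assert (x' <= r ^ Q) by nra.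
      assert (A2 * x' ^ n <= / r ^ R0) by (apply (weak_coef_pow_le r A2 x' n Q R0); lra). lra.
    - assert (Hnj : INR n * r ^ j <= 1).
      { apply Rle_trans with (/ r ^ j * r ^ j).
        - apply Rmult_le_compat_r; lra.
        - rewrite Rinv_l; lra. }
      assert (x' ^ n <= 3 * x2 ^ n).
      { apply (pow_perturb_le x' x2 (r ^ (Q + 1 + j))); [lra | nra | lra |].
        rewrite Hsplit.
        replace (INR n * (r ^ Q * r * r ^ j)) with (r ^ Q * r * (INR n * r ^ j)) by ring.
        assert (HrQ1 : 0 < r ^ Q * r) by nra.
        pose proof (Rmult_le_compat_l (r ^ Q * r) _ _ (Rlt_le _ _ HrQ1) Hnj). lra. }
      assert (A2 * x' ^ n <= A2 * (3 * x2 ^ n)) by (apply Rmult_le_compat_l; lra). lra. }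
  assert (A' * x' ^ n <= (A2 + d) * x' ^ n) by (apply Rmult_le_compat_r; lra). nra.
Qed.

Lemma Cmod_minus_triang (x y z : C) :
  Cmod (Cminus x z) <= Cmod (Cminus x y) + Cmod (Cminus y z).
Proof.
  replace (Cminus x z) with (Cplus (Cminus x y) (Cminus y z)) by (unfold Cminus; ring).
  apply Cmod_triangle.
Qed.

Lemma Cmod_minus_sym (x y : C) : Cmod (Cminus x y) = Cmod (Cminus y x).
Proof.
  replace (Cminus x y) with (Copp (Cminus y x)) by (unfold Cminus; ring). apply Cmod_opp.
Qed.

Lemma Cmod_pow_n (x : C) (n : nat) : Cmod (pow_n x n) = Cmod x ^ n.
Proof.
  induction n as [|n IH]; simpl; [apply Cmod_1|].
  change (mult x (pow_n x n)) with (Cmult x (pow_n x n)). now rewrite Cmod_mult, IH.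
Qed.

Lemma Cmod_hps_net (a : nat -> R -> C) (c z : R -> C) (n : nat) (e : R) :
  Cmod (hps_net a c z n e) = Cmod (a n e) * Cmod (Cminus (z e) (c e)) ^ n.
Proof. unfold hps_net. now rewrite Cmod_mult, Cmod_pow_n. Qed.

Lemma sum_n_m_succ_minus (b : nat -> C) (m : nat) :
  b (S m) = Cminus (sum_n_m b 0 (S m)) (sum_n_m b 0 m).
Proof.
  rewrite sum_n_Sm by lia.
  change (plus (sum_n_m b 0 m) (b (S m))) with (Cplus (sum_n_m b 0 m) (b (S m))).
  unfold Cminus. ring.
Qed.

Lemma Cmod_term_le_partial_sums (b : nat -> C) (n : nat) :
  Cmod (b n) <= Cmod (sum_n_m b 0 n) + Cmod (sum_n_m b 0 (pred n)).
Proof.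
  destruct n as [|m]; simpl.
  - rewrite sum_n_n. pose proof (Cmod_ge_0 (b 0%nat)). lra.
  - rewrite sum_n_m_succ_minus. unfold Cminus at 1. rewrite <- (Cmod_opp (sum_n_m b 0 m)).
    apply Cmod_triangle.
Qed.

Lemma Cmod_term_le_dist_partial_sums (b : nat -> C) (s : C) (n : nat) : (1 <= n)%nat ->
  Cmod (b n) <= Cmod (Cminus (sum_n_m b 0 n) s) + Cmod (Cminus (sum_n_m b 0 (pred n)) s).
Proof.
  intros Hn. destruct n as [|m]; [lia|]. simpl.
  rewrite sum_n_m_succ_minus, (Cmod_minus_sym (sum_n_m b 0 m)). apply Cmod_minus_triang.
Qed.

Fixpoint argmax (f : nat -> R) (m : nat) : nat :=
  match m with
  | O => O
  | S m' => let k := argmax f m' in if Rle_dec (f k) (f (S m')) then S m' else k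
  end.

Lemma argmax_spec (f : nat -> R) (m : nat) :
  (argmax f m <= m)%nat /\ forall n, (n <= m)%nat -> f n <= f (argmax f m).
Proof.
  induction m as [|m [IH1 IH2]]; simpl.
  - split; [lia|]. intros n Hn. replace n with 0%nat by lia. lra.
  - destruct (Rle_dec (f (argmax f m)) (f (S m))) as [H|H];
      (split; [lia|]); intros n Hn; destruct (Nat.eq_dec n (S m)) as [->|Hne]; try lra;
      specialize (IH2 n ltac:(lia)); lra.
Qed.

Section Gauge.
Variable g : gauge.
Local Notation rh := (rho g).

Lemma small_eps_rho (eta : R) : 0 < eta -> small_eps (fun e => 0 < rh e <= 1 /\ rh e < eta).
Proof.
  intros Heta. destruct (rho_to0 g eta Heta) as [e0 [He0 H]].
  exists (Rmin e0 1). split; [apply Rmin_glb_lt; lra|].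
  intros e He1 He2. pose proof (Rmin_l e0 1). pose proof (Rmin_r e0 1).
  pose proof (rho_in g e). pose proof (H e). lra.
Qed.

Lemma small_eps_rho_half : small_eps (fun e => 0 < rh e <= 1/2).
Proof. apply (small_eps_impl _ _ (small_eps_rho (1/2) ltac:(lra))). intros e. lra. Qed.

Lemma moderateR_le (x y : R -> R) :
  moderateR g y -> small_eps (fun e => Rabs (x e) <= Rabs (y e)) -> moderateR g x.
Proof.
  intros [N HN] H. exists N. apply (small_eps_impl _ _ (small_eps_and _ _ HN H)). intros e. lra.
Qed.

Lemma moderateR_plus (x y : R -> R) :
  moderateR g x -> moderateR g y -> moderateR g (fun e => x e + y e).
Proof.
  intros [N1 H1] [N2 H2]. exists (S (N1 + N2)).
  apply (small_eps_impl _ _ (small_eps_and _ _ (small_eps_and _ _ H1 H2) small_eps_rho_half)).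
  intros e [[Hx Hy] Hr].
  assert (/ rh e ^ N1 <= / rh e ^ (N1 + N2)) by (apply Rinv_pow_le1; [lra | lia]).
  assert (/ rh e ^ N2 <= / rh e ^ (N1 + N2)) by (apply Rinv_pow_le1; [lra | lia]).
  assert (Hinv : / rh e ^ S (N1 + N2) = / rh e * / rh e ^ (N1 + N2))
    by (simpl; apply Rinv_mult).
  assert (2 <= / rh e) by (replace 2 with (/ (1/2)) by field; apply Rinv_le_contravar; lra).
  assert (0 < / rh e ^ (N1 + N2)) by (apply Rinv_pow_pos; lra).
  pose proof (Rabs_triang (x e) (y e)). rewrite Hinv. nra.
Qed.

Lemma moderateR_mult (x y : R -> R) :
  moderateR g x -> moderateR g y -> moderateR g (fun e => x e * y e).
Proof.
  intros [N1 H1] [N2 H2]. exists (N1 + N2)%nat.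
  apply (small_eps_impl _ _ (small_eps_and _ _ H1 H2)). intros e [Hx Hy].
  rewrite Rabs_mult, pow_add, Rinv_mult.
  apply Rmult_le_compat; auto using Rabs_pos.
Qed.

Lemma moderateR_inv_pow (k : nat) : moderateR g (fun e => / rh e ^ k).
Proof.
  exists k. apply (small_eps_impl _ _ (small_eps_rho 1 ltac:(lra))). intros e Hr.
  rewrite Rabs_pos_eq; [lra|]. left. apply Rinv_pow_pos. lra.
Qed.

Lemma moderateR_const (c : R) : moderateR g (fun _ => c).
Proof.
  assert (Hc : 0 < / (Rabs c + 1)) by (apply Rinv_0_lt_compat; pose proof (Rabs_pos c); lra).
  exists 1%nat. apply (small_eps_impl _ _ (small_eps_rho _ Hc)). intros e Hr.
  rewrite pow_1. pose proof (Rabs_pos c).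
  assert (rh e * (Rabs c + 1) < 1).
  { replace 1 with (/ (Rabs c + 1) * (Rabs c + 1)) at 2 by (field; lra).
    apply Rmult_lt_compat_r; lra. }
  apply Rmult_le_reg_l with (rh e); [lra|]. rewrite Rinv_r; nra.
Qed.

Lemma moderateC_minus (z c : R -> C) :
  moderateC g z -> moderateC g c -> moderateC g (fun e => Cminus (z e) (c e)).
Proof.
  intros Hz Hc. apply (moderateR_le _ _ (moderateR_plus _ _ Hz Hc)), small_eps_always.
  intros e. rewrite !Rabs_pos_eq by (try apply Rplus_le_le_0_compat; apply Cmod_ge_0).
  unfold Cminus. rewrite <- (Cmod_opp (c e)). apply Cmod_triangle.
Qed.

Lemma hypernat_le (N M : R -> nat) :
  hypernat g M -> (forall e, (N e <= M e)%nat) -> hypernat g N.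
Proof.
  intros HM H. apply (moderateR_le _ _ HM), small_eps_always. intros e.
  rewrite !Rabs_pos_eq by apply pos_INR. apply le_INR, H.
Qed.

Lemma hypernat_max (N M : R -> nat) :
  hypernat g N -> hypernat g M -> hypernat g (fun e => Nat.max (N e) (M e)).
Proof.
  intros HN HM. apply (moderateR_le _ _ (moderateR_plus _ _ HN HM)), small_eps_always.
  intros e. pose proof (pos_INR (N e)). pose proof (pos_INR (M e)).
  rewrite !Rabs_pos_eq by (try apply pos_INR; lra).
  destruct (Nat.max_spec (N e) (M e)) as [[_ ->] | [_ ->]]; lra.
Qed.

Lemma hypernat_succ (N : R -> nat) : hypernat g N -> hypernat g (fun e => S (N e)).
Proof.
  intros HN. apply (moderateR_le _ _ (moderateR_plus _ _ HN (moderateR_const 1))).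
  apply small_eps_always. intros e. rewrite S_INR. lra.
Qed.

Lemma hypernat_natceil (x : R -> R) :
  moderateR g x -> small_eps (fun e => 0 <= x e) -> hypernat g (fun e => natceil (x e)).
Proof.
  intros Hx Hx0. apply (moderateR_le _ _ (moderateR_plus _ _ Hx (moderateR_const 1))).
  apply (small_eps_impl _ _ Hx0). intros e He. pose proof (natceil_spec (x e) He).
  rewrite !Rabs_pos_eq by (try apply pos_INR; lra). lra.
Qed.

Lemma leR_of_le (x y : R -> R) : (forall e, x e <= y e) -> leR g x y.
Proof.
  intros H. exists (fun _ => 0). split.
  - intros q. apply (small_eps_impl _ _ (small_eps_rho 1 ltac:(lra))). intros e Hr.
    rewrite Rabs_R0. apply pow_le. lra.
  - apply small_eps_always. intros e. rewrite Rplus_0_r. apply H.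
Qed.

Lemma negligibleR_le_plus (u x y : R -> R) :
  negligibleR g x -> negligibleR g y ->
  small_eps (fun e => Rabs (u e) <= Rabs (x e) + Rabs (y e)) -> negligibleR g u.
Proof.
  intros Hx Hy Hu q.
  apply (small_eps_impl _ _ (small_eps_and _ _ (small_eps_and _ _ (Hx (S q)) (Hy (S q)))
    (small_eps_and _ _ Hu small_eps_rho_half))).
  intros e [[H1 H2] [H3 Hr]]. simpl in H1, H2.
  assert (0 < rh e ^ q) by (apply pow_lt; lra). nra.
Qed.

Lemma equivC_sym (x y : R -> C) : equivC g x y -> equivC g y x.
Proof.
  intros H q. apply (small_eps_impl _ _ (H q)). intros e. now rewrite Cmod_minus_sym.
Qed.

Lemma equivC_trans (x y z : R -> C) : equivC g x y -> equivC g y z -> equivC g x z.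
Proof.
  intros Hxy Hyz. apply (negligibleR_le_plus _ _ _ Hxy Hyz), small_eps_always. intros e.
  rewrite !Rabs_pos_eq by (try apply Rplus_le_le_0_compat; apply Cmod_ge_0).
  apply Cmod_minus_triang.
Qed.

Lemma equivC_minus (z z' c c' : R -> C) :
  equivC g z z' -> equivC g c c' ->
  equivC g (fun e => Cminus (z e) (c e)) (fun e => Cminus (z' e) (c' e)).
Proof.
  intros Hz Hc. apply (negligibleR_le_plus _ _ _ Hz Hc), small_eps_always. intros e.
  rewrite !Rabs_pos_eq by (try apply Rplus_le_le_0_compat; apply Cmod_ge_0).
  replace (Cminus (Cminus (z e) (c e)) (Cminus (z' e) (c' e)))
    with (Cplus (Cminus (z e) (z' e)) (Copp (Cminus (c e) (c' e)))) by (unfold Cminus; ring).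
  rewrite <- (Cmod_opp (Cminus (c e) (c' e))). apply Cmod_triangle.
Qed.

Lemma equivC_Cmod_le (x y : R -> C) (q : nat) :
  equivC g x y -> small_eps (fun e => Cmod (x e) <= Cmod (y e) + rh e ^ q).
Proof.
  intros H. apply (small_eps_impl _ _ (H q)). intros e Hq.
  rewrite Rabs_pos_eq in Hq by apply Cmod_ge_0.
  replace (x e) with (Cplus (Cminus (x e) (y e)) (y e)) at 1 by (unfold Cminus; ring).
  pose proof (Cmod_triangle (Cminus (x e) (y e)) (y e)). lra.
Qed.

Lemma strong_equiv_sym (a b : nat -> R -> C) : strong_equiv g a b -> strong_equiv g b a.
Proof.
  intros H q r. apply (small_eps_impl _ _ (H q r)). intros e Hn n.
  rewrite Cmod_minus_sym. apply Hn.
Qed.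

Lemma strong_equiv_trans (a b c : nat -> R -> C) :
  strong_equiv g a b -> strong_equiv g b c -> strong_equiv g a c.
Proof.
  intros Hab Hbc q r.
  apply (small_eps_impl _ _ (small_eps_and _ _ (small_eps_and _ _ (Hab q (S r)) (Hbc q (S r)))
    small_eps_rho_half)).
  intros e [[H1 H2] Hr] n. specialize (H1 n). specialize (H2 n).
  rewrite Nat.add_succ_r in H1, H2. simpl in H1, H2.
  assert (0 < rh e ^ (n * q + r)) by (apply pow_lt; lra).
  pose proof (Cmod_minus_triang (a n e) (b n e) (c n e)). nra.
Qed.

End Gauge.

Section Hyperseries.
Variable g : gauge.
Local Notation rh := (rho g).
Variable b : nat -> R -> C.

Lemma max_term_moderate (M : R -> nat) :
  mod_hypersums g b -> hypernat g M ->
  exists T : R -> R, moderateR g T /\ forall e n, (n <= M e)%nat -> Cmod (b n e) <= T e.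
Proof.
  intros Hb HM. set (Nmax := fun e => argmax (fun n => Cmod (b n e)) (M e)).
  assert (HNmax : hypernat g Nmax)
    by (apply (hypernat_le g _ M HM); intros e; apply argmax_spec).
  assert (HNmax' : hypernat g (fun e => pred (Nmax e)))
    by (apply (hypernat_le g _ Nmax HNmax); intros e; lia).
  exists (fun e => Cmod (b (Nmax e) e)). split.
  - apply (moderateR_le g _ _ (moderateR_plus g _ _ (Hb _ HNmax) (Hb _ HNmax'))).
    apply small_eps_always. intros e. unfold hsum.
    rewrite !Rabs_pos_eq by (try apply Rplus_le_le_0_compat; apply Cmod_ge_0).
    apply (Cmod_term_le_partial_sums (fun n => b n e)).
  - intros e n Hn. apply (argmax_spec (fun n => Cmod (b n e))), Hn.
Qed.

Lemma hyperlimit_tail_terms (s : R -> C) :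
  hyperlimit g (hsum b) s ->
  exists M : R -> nat, hypernat g M /\ forall N, hypernat g N ->
    small_eps (fun e => (M e < N e)%nat -> Cmod (b (N e) e) <= 2).
Proof.
  intros Hlim. destruct (Hlim 0%nat) as (M & HM & Htail). exists M. split; [easy|].
  (* [N1] agrees with [N] wherever [N] exceeds [M], and lies beyond [M] everywhere, as the
     hyperlimit requires. *)
  intros N HN. set (N1 := fun e => Nat.max (N e) (S (M e))).
  assert (HN1 : hypernat g N1) by (apply hypernat_max, hypernat_succ; easy).
  assert (HN1' : hypernat g (fun e => pred (N1 e)))
    by (apply (hypernat_le g _ N1 HN1); intros e; lia).
  destruct (Htail N1 HN1) as [m1 Hm1].
  { apply leR_of_le. intros e. apply le_INR. unfold N1. lia. }
  destruct (Htail _ HN1') as [m2 Hm2].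
  { apply leR_of_le. intros e. apply le_INR. unfold N1. lia. }
  apply (small_eps_impl _ _ (small_eps_and _ _ (small_eps_and _ _ Hm1 Hm2)
    (small_eps_rho g 1 ltac:(lra)))).
  intros e [[H1 H2] Hr] HMN. unfold hsum in H1, H2. simpl in H1, H2.
  assert (HN1e : N1 e = N e) by (unfold N1; lia). rewrite HN1e in H1, H2.
  assert (0 < rh e ^ m1) by (apply pow_lt; lra).
  assert (0 < rh e ^ m2) by (apply pow_lt; lra).
  pose proof (Cmod_term_le_dist_partial_sums (fun n => b n e) (s e) (N e) ltac:(lia)). lra.
Qed.

Lemma hyperseries_terms_bounded (s : R -> C) :
  mod_hypersums g b -> hyperlimit g (hsum b) s ->
  exists T : R -> R, moderateR g T /\ (forall e, 0 <= T e) /\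
    forall N, hypernat g N -> small_eps (fun e => Cmod (b (N e) e) <= T e + 2).
Proof.
  intros Hb Hlim. destruct (hyperlimit_tail_terms s Hlim) as (M & HM & Htail).
  destruct (max_term_moderate M Hb HM) as (T & HT & Hmax).
  assert (HT0 : forall e, 0 <= T e).
  { intros e. apply Rle_trans with (Cmod (b 0%nat e)); [apply Cmod_ge_0 | apply Hmax; lia]. }
  exists T. split; [|split]; [easy | easy |].
  intros N HN. apply (small_eps_impl _ _ (Htail N HN)). intros e Hbig.
  destruct (le_lt_dec (N e) (M e)) as [Hle | Hlt].
  - specialize (Hmax e (N e) Hle). lra.
  - specialize (Hbig Hlt). specialize (HT0 e). lra.
Qed.

End Hyperseries.

Section Representatives.
Variable g : gauge.
Local Notation rh := (rho g).

Lemma hps_net_change_repr (a' a2 : nat -> R -> C) (c' c2 z' z2 : R -> C) (Q R0 : nat)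
    (N : R -> nat) :
  small_eps (fun e => forall n, Cmod (a2 n e) <= / rh e ^ (n * Q + R0)) ->
  strong_equiv g a' a2 ->
  moderateC g (fun e => Cminus (z' e) (c' e)) ->
  equivC g (fun e => Cminus (z' e) (c' e)) (fun e => Cminus (z2 e) (c2 e)) ->
  hypernat g N ->
  small_eps (fun e => Cmod (hps_net a' c' z' (N e) e)
                      <= 3 * Cmod (hps_net a2 c2 z2 (N e) e) + / rh e ^ R0 + 1).
Proof.
  intros HQ Ha [k Hk] Hw [j Hj].
  apply (small_eps_impl _ _ (small_eps_and _ _ (small_eps_and _ _ HQ (Ha k 0%nat))
    (small_eps_and _ _ (small_eps_and _ _ Hk (equivC_Cmod_le g _ _ (Q + 1 + j) Hw))
      (small_eps_and _ _ Hj (small_eps_rho_half g))))).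
  intros e [[Ha2 Hd] [[Hw' Hww] [Hn Hr]]]. set (n := N e) in *.
  specialize (Ha2 n). specialize (Hd n). rewrite Nat.add_0_r in Hd.
  rewrite Rabs_pos_eq in Hw' by apply Cmod_ge_0.
  rewrite Rabs_pos_eq in Hn by apply pos_INR.
  assert (Ha' : Cmod (a' n e) <= Cmod (a2 n e) + Cmod (Cminus (a' n e) (a2 n e))).
  { replace (a' n e) with (Cplus (a2 n e) (Cminus (a' n e) (a2 n e))) at 1
      by (unfold Cminus; ring).
    apply Cmod_triangle. }
  rewrite !Cmod_hps_net.
  apply (coef_pow_change_le _ _ _ (Cmod (Cminus (a' n e) (a2 n e))) _ _ n Q R0 j k);
    repeat split; auto using Cmod_ge_0; lra.
Qed.

Lemma conv_set_terms_bounded (a : nat -> R -> C) (c z : R -> C) (a' : nat -> R -> C)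
    (c' z' : R -> C) :
  in_conv_set g a c z -> strong_equiv g a a' ->
  moderateC g c' -> equivC g c c' -> moderateC g z' -> equivC g z z' ->
  exists K : R -> nat, hypernat g K /\ forall N : R -> nat, hypernat g N ->
    ltR g (fun e => Cmod (hps_net a' c' z' (N e) e)) (fun e => INR (K e)).
Proof.
  intros Hin Ha' Hc' Hcc' Hz' Hzz'.
  destruct Hin as (a2 & c2 & z2 & [Q [R0 HQ]] & Ha2 & _ & Hcc2 & _ & Hzz2 & _ & Hb2 &
                   (s & _ & _ & Hlim) & _).
  destruct (hyperseries_terms_bounded g _ s Hb2 Hlim) as (T & HT & HT0 & HTb).
  assert (Ha'2 : strong_equiv g a' a2) by eauto using strong_equiv_trans, strong_equiv_sym.
  assert (Hw : equivC g (fun e => Cminus (z' e) (c' e)) (fun e => Cminus (z2 e) (c2 e)))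
    by (apply equivC_minus; eauto using equivC_trans, equivC_sym).
  set (X := fun e => 3 * T e + / rh e ^ R0 + 8).
  assert (HX0 : small_eps (fun e => 0 <= X e)).
  { apply (small_eps_impl _ _ (small_eps_rho_half g)). intros e Hr. unfold X.
    specialize (HT0 e). pose proof (Rinv_pow_pos (rh e) R0 (proj1 Hr)). lra. }
  exists (fun e => natceil (X e)). split.
  - apply (hypernat_natceil g X); [|exact HX0].
    apply moderateR_plus; [apply moderateR_plus|]; auto using moderateR_mult, moderateR_const,
      moderateR_inv_pow.
  - intros N HN. exists 0%nat.
    apply (small_eps_impl _ _ (small_eps_and _ _ (small_eps_and _ _ HX0 (HTb N HN))
      (hps_net_change_repr a' a2 c' c2 z' z2 Q R0 N HQ Ha'2
         (moderateC_minus g _ _ Hz' Hc') Hw HN))).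
    intros e [[HXe H1] H2]. pose proof (natceil_spec (X e) HXe). unfold X in *. simpl. lra.
Qed.

Lemma hps_net_bounded_near_center (a : nat -> R -> C) (c : R -> C) :
  weakly_moderate g a ->
  exists delta : R -> R, moderateR g delta /\ ltR g (fun _ => 0) delta /\
    forall z : R -> C, moderateC g z ->
      ltR g (fun e => Cmod (Cminus (z e) (c e))) delta ->
      exists K : R -> R, moderateR g K /\ ltR g (fun _ => 0) K /\
        small_eps (fun e => forall n : nat, Cmod (hps_net a c z n e) < K e).
Proof.
  intros [Q [R0 HQ]]. exists (fun e => rh e ^ Q). split; [|split].
  - apply (moderateR_le g _ _ (moderateR_const g 1)).
    apply (small_eps_impl _ _ (small_eps_rho g 1 ltac:(lra))). intros e Hr.
    pose proof (Rle_pow_le1 (rh e) 0 Q ltac:(lra) ltac:(lia)). simpl in *.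
    rewrite !Rabs_pos_eq by (try apply pow_le; lra). lra.
  - exists (S Q). apply (small_eps_impl _ _ (small_eps_rho g 1 ltac:(lra))). intros e Hr.
    simpl. assert (0 < rh e ^ Q) by (apply pow_lt; lra). nra.
  - intros z _ [m Hm]. exists (fun e => / rh e ^ R0 + 1). split; [|split].
    + apply moderateR_plus; [apply moderateR_inv_pow | apply moderateR_const].
    + exists 0%nat. apply (small_eps_impl _ _ (small_eps_rho g 1 ltac:(lra))). intros e Hr.
      pose proof (Rinv_pow_pos (rh e) R0 (proj1 (proj1 Hr))). simpl. lra.
    + apply (small_eps_impl _ _ (small_eps_and _ _ (small_eps_and _ _ HQ Hm)
        (small_eps_rho g 1 ltac:(lra)))).
      intros e [[Ha Hz] Hr] n. rewrite Cmod_hps_net.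
      assert (0 < rh e ^ m) by (apply pow_lt; lra).
      pose proof (Cmod_ge_0 (a n e)). pose proof (Cmod_ge_0 (Cminus (z e) (c e))).
      pose proof (weak_coef_pow_le (rh e) (Cmod (a n e)) (Cmod (Cminus (z e) (c e))) n Q R0
        ltac:(lra) (conj (Cmod_ge_0 _) (Ha n)) ltac:(lra)). lra.
Qed.

End Representatives.

Theorem lemma2p32 (g : gauge) (a : nat -> R -> C) (c : R -> C)
  (Ha : weakly_moderate g a) (Hc : moderateC g c) :
  (* (i) *)
  (forall z : R -> C, moderateC g z -> in_conv_set g a c z ->
     forall (a' : nat -> R -> C) (c' z' : R -> C),
       weakly_moderate g a' -> strong_equiv g a a' ->
       moderateC g c' -> equivC g c c' -> moderateC g z' -> equivC g z z' ->
       mod_hypersums g (hps_net a' c' z') ->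
       exists K : R -> nat, hypernat g K /\
         forall N : R -> nat, hypernat g N ->
           ltR g (fun e => Cmod (hps_net a' c' z' (N e) e)) (fun e => INR (K e)))
  /\
  (* (ii) *)
  (exists delta : R -> R, moderateR g delta /\ ltR g (fun _ => 0) delta /\
     forall z : R -> C, moderateC g z ->
       ltR g (fun e => Cmod (Cminus (z e) (c e))) delta ->
       exists K : R -> R, moderateR g K /\ ltR g (fun _ => 0) K /\
         small_eps (fun e => forall n : nat,
           Cmod (hps_net a c z n e) < K e)).
Proof.
  split.
  - intros z _ Hin a' c' z' _ Ha' Hc' Hcc' Hz' Hzz' _.
    exact (conv_set_terms_bounded g a c z a' c' z' Hin Ha' Hc' Hcc' Hz' Hzz').
  - exact (hps_net_bounded_near_center g a c Ha).
Qed.
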